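(* Let $1<a<b$ be coprime integers and $D,E\subseteq G$ subdiagrams. Let $N(D,U_E)=\{(i,j)\in D\times U_E: i\to j\}$, let $N_b(D,U_E)$ be the set of $(i,j)\in N(D,U_E)$ with $j$ strictly north of $i$, and $N_r(D,U_E)=N(D,U_E)\setminus N_b(D,U_E)$ (pairs with $j$ strictly south of $i$ or $j=i$). Then \[ |N_b(D,U_E)|=\#\{c\in D\cap E:\ M_D^E(c)\le a/b\},\qquad |N_r(D,U_E)|=|D\setminus E|+\#\{c\in D\cap E:\ m_E^D(c)\ge a/b\}. \]
   Context: Fix coprime integers $1<a<b$. Work in the grid $\mathbb{Z}^2$ ($+x$ east, $+y$ north). Let $g:\mathbb{Z}^2\to\mathbb{Z}$, $g(x,y)=ab-ax-by$; for a cell $c=(x,y)$ and integer $k$, $c-ka:=(x+k,y)$ and $c-kb:=(x,y+k)$. Let $G=\{(x,y)\in\mathbb{Z}_{\ge1}^2: g(x,y)>0\}$. A subdiagram is a subset $D\subseteq G$ such that whenever $(x,y)\in D$, $(x',y')\in G$, $x'\le x$, $y'\le y$, we have $(x',y')\in D$. For cells $i,j$, write $i\to j$ iff $0\le g(j)-g(i)<a$. For a subdiagram $E$, $U_E=\{(x,y)\in\mathbb{Z}^2: (x,y)\notin E,\ (x,y-1)\in E\cup(\mathbb{Z}_{\ge1}\times\mathbb{Z}_{\le0})\}$. For a subdiagram $D$ and $c\in D$, $\mathrm{arm}_D(c)=\max\{k\ge0: c-ka\in D\}$, $\mathrm{leg}_D(c)=\max\{k\ge0: c-kb\in D\}$.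 For subdiagrams $D,E$ and $c\in D\cap E$, $m_D^E(c)=\frac{\mathrm{leg}_E(c)}{\mathrm{arm}_D(c)+1}$ and $M_D^E(c)=\frac{\mathrm{leg}_E(c)+1}{\mathrm{arm}_D(c)}$ (with $M_D^E(c)=+\infty$ if $\mathrm{arm}_D(c)=0$). *)

From Stdlib Require Import ZArith QArith List.
Open Scope Z_scope.

Definition cell := (Z * Z)%type.

Definition g (a b : Z) (c : cell) : Z := a * b - a * fst c - b * snd c.

(* c - k a := (x+k, y) ;  c - k b := (x, y+k) *)
Definition shiftA (c : cell) (k : Z) : cell := (fst c + k, snd c).
Definition shiftB (c : cell) (k : Z) : cell := (fst c, snd c + k).

Definition inG (a b : Z) (c : cell) : Prop := 1 <= fst c /\ 1 <= snd c /\ 0 < g a b c.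

Definition subdiagram (a b : Z) (D : cell -> Prop) : Prop :=
  (forall c, D c -> inG a b c) /\
  (forall x y x' y', D (x, y) -> inG a b (x', y') -> x' <= x -> y' <= y -> D (x', y')).

Definition arrow (a b : Z) (i j : cell) : Prop := 0 <= g a b j - g a b i < a.

Definition UE (E : cell -> Prop) (c : cell) : Prop :=
  ~ E c /\ (E (fst c, snd c - 1) \/ (1 <= fst c /\ snd c - 1 = 0)).

Definition is_max (P : Z -> Prop) (k : Z) : Prop := P k /\ forall k', P k' -> k' <= k.

Definition is_arm (D : cell -> Prop) (c : cell) (k : Z) : Prop :=
  is_max (fun k => 0 <= k /\ D (shiftA c k)) k.
Definition is_leg (D : cell -> Prop) (c : cell) (k : Z) : Prop :=
  is_max (fun k => 0 <= k /\ D (shiftB c k)) k.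

(* m = leg / (arm + 1) ;  M = (leg + 1) / arm, with None standing for +infinity *)
Definition mval (armv legv : Z) : Q := (inject_Z legv / inject_Z (armv + 1))%Q.
Definition Mval (armv legv : Z) : option Q :=
  if armv =? 0 then None else Some (inject_Z (legv + 1) / inject_Z armv)%Q.

Definition M_le (D E : cell -> Prop) (c : cell) (q : Q) : Prop :=
  exists ar lg, is_arm D c ar /\ is_leg E c lg /\
    match Mval ar lg with None => False | Some v => (v <= q)%Q end.

Definition m_ge (D E : cell -> Prop) (c : cell) (q : Q) : Prop :=
  exists ar lg, is_arm D c ar /\ is_leg E c lg /\ (q <= mval ar lg)%Q.

Definition has_card {T : Type} (P : T -> Prop) (n : nat) : Prop :=
  exists l : list T, NoDup l /\ (forall x, In x l <-> P x) /\ length l = n.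

Definition Nset (a b : Z) (D E : cell -> Prop) (p : cell * cell) : Prop :=
  D (fst p) /\ UE E (snd p) /\ arrow a b (fst p) (snd p).
Definition Nb (a b : Z) (D E : cell -> Prop) (p : cell * cell) : Prop :=
  Nset a b D E p /\ snd (fst p) < snd (snd p).
Definition Nr (a b : Z) (D E : cell -> Prop) (p : cell * cell) : Prop :=
  Nset a b D E p /\ ~ Nb a b D E p.

(* A subdiagram is determined by its column heights, and U_E consists of the cells
   just above the columns of E.  An arrow i -> j between cells at vertical distance
   d = y_i - y_j forces the horizontal offset x_j - x_i = floor(b d / a).

   Hence a pair (i, j) of N_b is determined by the cell c = (x_j, y_i) of D ∩ E, and
   "i lies in D" says that the D-arm of c reaches ceil(b (leg_E c + 1) / a), i.e.
   M_D^E(c) <= a/b.  A pair (i, j) of N_r is determined by the cell c of the column of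
   i lying y_i - y_j below the top of D, and "j lies just above E" says that c moved
   floor(b leg_D(c) / a) steps east leaves E, which happens exactly when c is not in E
   or m_E^D(c) >= a/b. *)

From Stdlib Require Import ZArith QArith List Lia Wf_nat Classical ClassicalEpsilon.
Open Scope Z_scope.

Lemma has_card_of_incl {T : Type} (P : T -> Prop) (l : list T) :
  (forall x, P x -> In x l) -> exists n, has_card P n.
Proof.
  intros HPl.
  set (inP := fun x => if excluded_middle_informative (P x) then true else false).
  set (l' := nodup (fun x y => excluded_middle_informative (x = y)) (filter inP l)).
  exists (length l'), l'; split; [apply NoDup_nodup | split; [|reflexivity]].
  intros x; unfold l', inP; rewrite nodup_In, filter_In.
  destruct (excluded_middle_informative (P x)); split; try easy.
  intros Px; split; [exact (HPl x Px) | reflexivity].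
Qed.

Lemma has_card_or {T : Type} (P Q : T -> Prop) m n :
  has_card P m -> has_card Q n -> (forall x, P x -> Q x -> False) ->
  has_card (fun x => P x \/ Q x) (m + n).
Proof.
  intros [l1 [N1 [I1 L1]]] [l2 [N2 [I2 L2]]] Hdisj.
  exists (l1 ++ l2); split; [|split].
  - apply NoDup_app; auto. intros x H1 H2; apply (Hdisj x); [apply I1 | apply I2]; auto.
  - intros x; rewrite in_app_iff, I1, I2; tauto.
  - rewrite length_app; lia.
Qed.

Lemma has_card_bij {A B : Type} (P : A -> Prop) (Q : B -> Prop) (f : A -> B) (g : B -> A) n :
  (forall x, P x -> Q (f x)) -> (forall y, Q y -> P (g y)) ->
  (forall x, P x -> g (f x) = x) -> (forall y, Q y -> f (g y) = y) ->
  has_card P n -> has_card Q n.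
Proof.
  intros PQ QP gf fg [l [Hnd [Hin Hlen]]].
  exists (map f l); split; [|split].
  - apply NoDup_map_NoDup_ForallPairs; [|exact Hnd].
    intros x y Hx Hy Hf; rewrite <- (gf x), <- (gf y), Hf; auto; apply Hin; auto.
  - intros y; rewrite in_map_iff; split.
    + intros [x [<- Hx]]; apply PQ, Hin, Hx.
    + intros Qy; exists (g y); split; [apply fg, Qy | apply Hin, QP, Qy].
  - rewrite length_map; exact Hlen.
Qed.

Lemma bounded_has_max (P : Z -> Prop) k0 N :
  P k0 -> (forall k, P k -> k <= N) -> exists k, is_max P k.
Proof.
  intros Pk0 HN.
  destruct (dec_inh_nat_subset_has_unique_least_element
              (fun n => P (N - Z.of_nat n)) (fun n => classic _))
    as [n [[Pn Hmin] _]].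
  { exists (Z.to_nat (N - k0)); rewrite Z2Nat.id by (specialize (HN k0 Pk0); lia).
    now replace (N - (N - k0)) with k0 by lia. }
  exists (N - Z.of_nat n); split; [exact Pn|].
  intros k Pk; specialize (HN k Pk); specialize (Hmin (Z.to_nat (N - k))).
  rewrite Z2Nat.id in Hmin by lia.
  replace (N - (N - k)) with k in Hmin by lia. specialize (Hmin Pk); lia.
Qed.

Definition zrange (n : Z) : list Z := map Z.of_nat (seq 0 (Z.to_nat n)).

Lemma in_zrange n z : 0 <= z < n -> In z (zrange n).
Proof.
  intros Hz; apply in_map_iff; exists (Z.to_nat z); split; [lia|].
  apply in_seq; lia.
Qed.

Definition column (S : cell -> Prop) (h : Z -> Z) : Prop :=
  forall x y, S (x, y) <-> 1 <= y <= h x.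

(* [/] rounds towards minus infinity, also for negative [d]. *)
Definition arrow_dx (a b d : Z) : Z := b * d / a.

Lemma le_div_iff a k m : 0 < a -> (k <= m / a <-> a * k <= m).
Proof.
  intros Ha; pose proof (Z.div_mod m a ltac:(lia)); pose proof (Z.mod_pos_bound m a Ha).
  split; intros; nia.
Qed.

Lemma inject_Z_div_le p q r s : 0 < q -> 0 < s ->
  ((inject_Z p / inject_Z q <= inject_Z r / inject_Z s)%Q <-> p * s <= r * q).
Proof.
  intros Hq Hs; destruct q as [|q|q]; try lia; destruct s as [|s|s]; try lia.
  unfold Qle, Qdiv, Qmult, Qinv, inject_Z; simpl; lia.
Qed.

Section Diagrams.

Variables a b : Z.
Hypotheses (Ha : 0 < a) (Hb : 0 < b).

Lemma inG_box c : inG a b c -> 1 <= fst c < b /\ 1 <= snd c < a.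
Proof. destruct c as [x y]; unfold inG, g; simpl; intros; nia. Qed.

Lemma subdiagram_down S x y x' y' :
  subdiagram a b S -> S (x, y) -> 1 <= x' <= x -> 1 <= y' <= y -> S (x', y').
Proof.
  intros [HG Hdown] Sxy Hx Hy; apply (Hdown x y); [exact Sxy | | lia | lia].
  specialize (HG _ Sxy); unfold inG, g in *; simpl in *; nia.
Qed.

Lemma subdiagram_card S P :
  subdiagram a b S -> (forall c, P c -> S c) -> exists n, has_card P n.
Proof.
  intros [HG _] HPS; apply (has_card_of_incl P (list_prod (zrange b) (zrange a))).
  intros [x y] Pc; pose proof (inG_box _ (HG _ (HPS _ Pc))); simpl in *.
  apply in_prod; apply in_zrange; lia.
Qed.

Lemma subdiagram_column S :
  subdiagram a b S -> exists h, (forall x, 0 <= h x) /\ column S h.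
Proof.
  intros SS.
  assert (Hcol : forall x, exists H, 0 <= H /\ forall y, S (x, y) <-> 1 <= y <= H).
  { intros x.
    destruct (bounded_has_max (fun y => y = 0 \/ S (x, y)) 0 a (or_introl eq_refl))
      as [H [PH HM]].
    { intros k [->|Sk]; [lia|]. pose proof (inG_box (x, k) (proj1 SS _ Sk)); simpl in *; lia. }
    exists H; split; [apply HM; left; reflexivity|].
    intros y; split.
    - intros Sy; pose proof (inG_box (x, y) (proj1 SS _ Sy)); simpl in *.
      split; [lia | apply HM; right; exact Sy].
    - intros Hy; destruct PH as [->|SH]; [lia|].
      pose proof (inG_box (x, H) (proj1 SS _ SH)); simpl in *.
      apply (subdiagram_down S x H); auto; lia. }
  destruct (choice _ Hcol) as [h Hh].
  exists h; split; [intros x; apply (proj1 (Hh x)) | intros x y; apply (proj2 (Hh x))].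
Qed.

Lemma is_leg_column S h x y lg :
  column S h -> S (x, y) -> (is_leg S (x, y) lg <-> lg = h x - y).
Proof.
  unfold column, is_leg, is_max, shiftB; simpl; intros HS Sxy; rewrite HS in Sxy.
  split.
  - intros [[Hlg Slg] Hmax]; rewrite HS in Slg.
    enough (h x - y <= lg) by lia.
    apply Hmax; split; [lia | apply HS; lia].
  - intros ->; split; [split; [lia | apply HS; lia]|].
    intros k [Hk Sk]; rewrite HS in Sk; lia.
Qed.

Lemma is_arm_exists S c : subdiagram a b S -> S c -> exists ar, is_arm S c ar.
Proof.
  intros SS Sc; apply (bounded_has_max _ 0 b).
  - split; [lia|]; unfold shiftA; rewrite Z.add_0_r; destruct c; exact Sc.
  - intros k [Hk Sk]; destruct SS as [HG _].
    pose proof (inG_box _ (HG _ Sc)); pose proof (inG_box _ (HG _ Sk)).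
    unfold shiftA in *; simpl in *; lia.
Qed.

Lemma is_arm_shift S x y ar k :
  subdiagram a b S -> S (x, y) -> is_arm S (x, y) ar -> 0 <= k ->
  (S (x + k, y) <-> k <= ar).
Proof.
  unfold is_arm, is_max, shiftA; simpl; intros SS Sxy [[Har Sar] Hmax] Hk; split.
  - intros Sk; apply Hmax; auto.
  - intros Hle; pose proof (inG_box _ (proj1 SS _ Sxy)); simpl in *.
    apply (subdiagram_down S (x + ar) y); auto; lia.
Qed.

Lemma UE_column E hE x y :
  subdiagram a b E -> (forall x, 0 <= hE x) -> column E hE ->
  (UE E (x, y) <-> 1 <= x /\ y = hE x + 1).
Proof.
  unfold column, UE; simpl; intros SE hE0 HE; specialize (hE0 x); split.
  - rewrite HE; intros [nE [Eb|[Hx Hy]]]; [|lia].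
    pose proof (inG_box _ (proj1 SE _ Eb)); rewrite HE in Eb; simpl in *; lia.
  - intros [Hx ->]; rewrite !HE; split; [lia|].
    destruct (Z.eq_dec (hE x) 0); [right | left]; lia.
Qed.

Lemma arrow_iff xi yi xj yj :
  arrow a b (xi, yi) (xj, yj) <-> xj - xi = arrow_dx a b (yi - yj).
Proof.
  unfold arrow, g, arrow_dx; simpl; split.
  - intros Harr; apply Z.div_unique_pos with (r := a * (xi - xj) + b * (yi - yj)); nia.
  - pose proof (Z.div_mod (b * (yi - yj)) a ltac:(lia)).
    pose proof (Z.mod_pos_bound (b * (yi - yj)) a Ha).
    intros; nia.
Qed.

End Diagrams.

Definition Nr_preimage (a b : Z) (D E : cell -> Prop) (hD : Z -> Z) (c : cell) : Prop :=
  D c /\ ~ E (fst c + arrow_dx a b (hD (fst c) - snd c), snd c).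

Section Counting.

Variables (a b : Z) (D E : cell -> Prop) (hD hE : Z -> Z).
Hypotheses (Ha : 0 < a) (Hb : 0 < b).
Hypotheses (SD : subdiagram a b D) (SE : subdiagram a b E).
Hypothesis HD : column D hD.
Hypotheses (hE0 : forall x, 0 <= hE x) (HE : column E hE).

Let ab := (inject_Z a / inject_Z b)%Q.
Let UE_E x y := UE_column a b Ha Hb E hE x y SE hE0 HE.

Lemma M_le_iff x y : D (x, y) -> E (x, y) ->
  (M_le D E (x, y) ab <-> D (x - arrow_dx a b (y - (hE x + 1)), y)).
Proof.
  intros Dxy Exy; pose proof (proj1 (HE x y) Exy).
  set (k := - arrow_dx a b (y - (hE x + 1))).
  assert (Hk : forall ar, k <= ar <-> b * (hE x - y + 1) <= a * ar).
  { intros ar; unfold k, arrow_dx.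
    rewrite Z.opp_le_mono, Z.opp_involutive, le_div_iff by exact Ha. lia. }
  assert (Hk1 : 1 <= k).
  { unfold k, arrow_dx; enough (~ 0 <= b * (y - (hE x + 1)) / a) by lia.
    rewrite le_div_iff by exact Ha. nia. }
  replace (x - arrow_dx a b (y - (hE x + 1))) with (x + k) by (unfold k; ring).
  unfold M_le, Mval, ab; split.
  - intros [ar [lg [Har [Hlg Hle]]]].
    apply (is_leg_column E hE) in Hlg as ->; auto.
    destruct (ar =? 0) eqn:Har0; [contradiction|]; apply Z.eqb_neq in Har0.
    assert (0 <= ar) by (destruct Har as [[? _] _]; auto).
    rewrite inject_Z_div_le in Hle by lia.
    apply (is_arm_shift a b Ha Hb D x y ar); auto; try lia; apply Hk; lia.
  - intros Dk; destruct (is_arm_exists a b Ha Hb D (x, y) SD Dxy) as [ar Har].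
    apply (is_arm_shift a b Ha Hb D x y ar) in Dk; auto; try lia.
    exists ar, (hE x - y); split; [exact Har | split; [apply (is_leg_column E hE); auto|]].
    destruct (ar =? 0) eqn:Har0; [apply Z.eqb_eq in Har0; lia|].
    rewrite inject_Z_div_le by lia. apply Hk in Dk; lia.
Qed.

Lemma m_ge_iff x y : D (x, y) -> E (x, y) ->
  (m_ge E D (x, y) ab <-> ~ E (x + arrow_dx a b (hD x - y), y)).
Proof.
  intros Dxy Exy; pose proof (proj1 (HD x y) Dxy).
  set (j := arrow_dx a b (hD x - y)).
  assert (Hj : forall ar, ar < j <-> a * (ar + 1) <= b * (hD x - y)).
  { intros ar; unfold j, arrow_dx; rewrite <- le_div_iff by exact Ha. lia. }
  assert (Hj0 : 0 <= j) by (unfold j, arrow_dx; apply le_div_iff; nia).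
  unfold m_ge, mval, ab; split.
  - intros [ar [lg [Har [Hlg Hle]]]].
    apply (is_leg_column D hD) in Hlg as ->; auto.
    assert (0 <= ar) by (destruct Har as [[? _] _]; auto).
    rewrite inject_Z_div_le in Hle by lia.
    rewrite (is_arm_shift a b Ha Hb E x y ar); auto.
    enough (ar < j) by lia. apply Hj; lia.
  - intros nEj; destruct (is_arm_exists a b Ha Hb E (x, y) SE Exy) as [ar Har].
    rewrite (is_arm_shift a b Ha Hb E x y ar) in nEj; auto.
    assert (0 <= ar) by (destruct Har as [[? _] _]; auto).
    exists ar, (hD x - y); split; [exact Har | split; [apply (is_leg_column D hD); auto|]].
    rewrite inject_Z_div_le by lia.
    enough (a * (ar + 1) <= b * (hD x - y)) by lia. apply Hj; lia.
Qed.

Lemma Nr_preimage_card n1 n2 :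
  has_card (fun c => D c /\ ~ E c) n1 ->
  has_card (fun c => D c /\ E c /\ m_ge E D c ab) n2 ->
  has_card (Nr_preimage a b D E hD) (n1 + n2).
Proof.
  intros H1 H2; unfold Nr_preimage.
  apply (has_card_bij (fun c => (D c /\ ~ E c) \/ (D c /\ E c /\ m_ge E D c ab)) _ id id).
  - unfold id; intros [x y] [[Dxy nE]|[Dxy [Exy Hm]]]; simpl; split; auto.
    + pose proof (proj1 (HD x y) Dxy); pose proof (inG_box a b Ha Hb _ (proj1 SD _ Dxy)).
      assert (0 <= arrow_dx a b (hD x - y)) by (apply le_div_iff; nia).
      intros Ej; apply nE, (subdiagram_down a b Ha Hb E _ y x y SE Ej); simpl in *; lia.
    + apply m_ge_iff; auto.
  - unfold id; intros [x y] [Dxy nEj]; destruct (classic (E (x, y))) as [Exy|nExy].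
    + right; repeat split; auto; apply m_ge_iff; auto.
    + left; auto.
  - reflexivity.
  - reflexivity.
  - apply has_card_or; auto; intros c [_ nE] [_ [Ec _]]; auto.
Qed.

Lemma Nb_card n :
  has_card (fun c => D c /\ E c /\ M_le D E c ab) n -> has_card (Nb a b D E) n.
Proof.
  apply has_card_bij with
    (f := fun c => ((fst c - arrow_dx a b (snd c - (hE (fst c) + 1)), snd c),
                    (fst c, hE (fst c) + 1)))
    (g := fun p => (fst (snd p), snd (fst p))).
  - intros [x y] [Dxy [Exy HM]]. rewrite M_le_iff in HM by auto.
    pose proof (inG_box a b Ha Hb _ (proj1 SD _ Dxy)); pose proof (proj1 (HE x y) Exy).
    simpl in *; unfold Nb, Nset; simpl; rewrite UE_E, (arrow_iff a b Ha).
    repeat split; auto; lia.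
  - intros [[xi yi] [xj yj]]; unfold Nb, Nset; simpl; rewrite UE_E, (arrow_iff a b Ha).
    intros [[Di [[Hxj ->] Hdx]] Hnorth].
    pose proof (proj1 (HD xi yi) Di).
    assert (Hneg : arrow_dx a b (yi - (hE xj + 1)) < 0).
    { unfold arrow_dx; enough (~ 0 <= b * (yi - (hE xj + 1)) / a) by lia.
      rewrite le_div_iff by exact Ha. nia. }
    assert (Exy : E (xj, yi)) by (apply HE; lia).
    assert (Dxy : D (xj, yi)) by (apply (subdiagram_down a b Ha Hb D xi yi); auto; lia).
    repeat split; auto. rewrite M_le_iff by auto.
    replace (xj - arrow_dx a b (yi - (hE xj + 1))) with xi by lia. exact Di.
  - intros [x y] _; reflexivity.
  - intros [[xi yi] [xj yj]]; unfold Nb, Nset; simpl; rewrite UE_E, (arrow_iff a b Ha).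
    intros [[_ [[_ ->] Hdx]] _].
    repeat f_equal; lia.
Qed.

Lemma Nr_card n : has_card (Nr_preimage a b D E hD) n -> has_card (Nr a b D E) n.
Proof.
  unfold Nr_preimage.
  apply has_card_bij with
    (f := fun c => let L := hD (fst c) - snd c in
                   let x' := fst c + arrow_dx a b L in
                   ((fst c, hE x' + 1 + L), (x', hE x' + 1)))
    (g := fun p => (fst (fst p), hD (fst (fst p)) - (snd (fst p) - snd (snd p)))).
  - intros [x y] [Dxy nEj]; simpl in *.
    set (x' := x + arrow_dx a b (hD x - y)) in *.
    destruct (inG_box a b Ha Hb _ (proj1 SD _ Dxy)) as [Hx _]; simpl in Hx.
    pose proof (proj1 (HD x y) Dxy).
    assert (0 <= arrow_dx a b (hD x - y)) by (apply le_div_iff; nia).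
    rewrite (HE _ _) in nEj; pose proof (hE0 x').
    unfold Nr, Nb, Nset; simpl; rewrite UE_E, (arrow_iff a b Ha).
    replace (hE x' + 1 + (hD x - y) - (hE x' + 1)) with (hD x - y) by ring.
    split; [split; [apply HD; lia | unfold x' in *; repeat split; lia] |].
    intros [_ Hnorth]; lia.
  - intros [[xi yi] [xj yj]]; unfold Nr, Nb, Nset; simpl; rewrite UE_E, (arrow_iff a b Ha).
    intros [[Di [[Hxj Hyj] Hdx]] Hsouth].
    pose proof (proj1 (HD xi yi) Di); pose proof (hE0 xj).
    assert (yj <= yi) by (apply Z.nlt_ge; intros Hlt; apply Hsouth; repeat split; auto).
    split; [apply HD; lia|]; simpl.
    replace (hD xi - (hD xi - (yi - yj))) with (yi - yj) by ring.
    replace (xi + arrow_dx a b (yi - yj)) with xj by lia. rewrite (HE _ _); lia.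
  - intros [x y] _; simpl; f_equal; lia.
  - intros [[xi yi] [xj yj]]; unfold Nr, Nb, Nset; simpl; rewrite UE_E, (arrow_iff a b Ha).
    intros [[_ [[_ ->] Hdx]] _].
    replace (hD xi - (hD xi - (yi - (hE xj + 1)))) with (yi - (hE xj + 1)) by ring.
    replace (xi + arrow_dx a b (yi - (hE xj + 1))) with xj by lia.
    repeat f_equal; lia.
Qed.

End Counting.

Theorem mainTheorem7 (a b : Z) (D E : cell -> Prop) :
  1 < a -> a < b -> Z.gcd a b = 1 ->
  subdiagram a b D -> subdiagram a b E ->
  (exists n,
      has_card (Nb a b D E) n /\
      has_card (fun c => D c /\ E c /\ M_le D E c (inject_Z a / inject_Z b)%Q) n) /\
  (exists n1 n2,
      has_card (Nr a b D E) (n1 + n2)%nat /\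
      has_card (fun c => D c /\ ~ E c) n1 /\
      has_card (fun c => D c /\ E c /\ m_ge E D c (inject_Z a / inject_Z b)%Q) n2).
Proof.
  intros Ha Hab _ SD SE.
  assert (Ha0 : 0 < a) by lia; assert (Hb0 : 0 < b) by lia.
  destruct (subdiagram_column a b Ha0 Hb0 D SD) as [hD [_ HD]].
  destruct (subdiagram_column a b Ha0 Hb0 E SE) as [hE [hE0 HE]].
  set (q := (inject_Z a / inject_Z b)%Q).
  split.
  - destruct (subdiagram_card a b Ha0 Hb0 D (fun c => D c /\ E c /\ M_le D E c q) SD)
      as [n Hn]; [tauto|].
    exists n; split; [|exact Hn].
    now apply (Nb_card a b D E hD hE).
  - destruct (subdiagram_card a b Ha0 Hb0 D (fun c => D c /\ ~ E c) SD) as [n1 H1]; [tauto|].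
    destruct (subdiagram_card a b Ha0 Hb0 D (fun c => D c /\ E c /\ m_ge E D c q) SD)
      as [n2 H2]; [tauto|].
    exists n1, n2; repeat split; auto.
    now apply (Nr_card a b D E hD hE), Nr_preimage_card.
Qed.
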